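(* For $A \in \mathbf{DLat}$ and any regular cardinal $\kappa$, (1) $A\in\kappa\mathbf{H}$ if and only if $\mathrm{p}\mathcal{H} A \subseteq \mathcal{BL}_\kappa A$; (2) $A\in\mathbf{pro}\kappa\mathbf{H}$ if and only if $\mathrm{p}\mathcal{H} A \subseteq \mathcal{BL}_\kappa A \cap \mathcal{DM} A$.
   Context: $\mathbf{DLat}$ is the class of bounded distributive lattices. For $A\in\mathbf{DLat}$: $\mathcal{DM} A$ is the Dedekind-MacNeille completion (normal ideals $N=N^{u\ell}$); a join $\bigvee S$ existing in $A$ is distributive if $a\wedge\bigvee S=\bigvee\{a\wedge s: s\in S\}$ for all $a\in A$; $\mathcal{BL} A$ (the Bruns-Lakser completion) is the frame of D-ideals of $A$ (downsets closed under distributive joins of their subsets); $A$ is identified with its principal downsets, so $A\subseteq\mathcal{DM} A\subseteq\mathcal{BL} A$. For a regular cardinal $\kappa$, a $\kappa$-frame is a lattice in which all joins of sets of cardinality $<\kappa$ exist and are distributive, and $\mathcal{BL}_\kappa A$ is the sub-$\kappa$-frame of $\mathcal{BL} A$ generated by $A$. A relative annihilator is $\langle a,b\rangle=\{x\in A: a\wedge x\le b\}$, and $\mathcal{R} A$ is the set of relative annihilators. The proHeyting extension $\mathrm{p}\mathcal{H} A$ is the bounded sublattice of $\mathcal{BL} A$ generated by $\mathcal{R} A$. $A\in\kappa\mathbf{H}$ means $\mathcal{R} A\subseteq\mathcal{BL}_\kappa A$; $A\in\mathbf{pro}\kappa\mathbf{H}$ means $\mathcal{R} A\subseteq\mathcal{BL}_\kappa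 A\cap\mathcal{DM} A$. $A$ is proHeyting if $\mathcal{R} A\subseteq\mathcal{DM} A$, equivalently $\mathcal{DM} A=\mathcal{BL} A$. *)

(* bounded distributive lattices are mathcomp's
   [tbDistrLatticeType d]; subsets of A are Prop-valued predicates. *)
From mathcomp Require Import all_boot all_order.
Set Implicit Arguments.
Unset Strict Implicit.
Unset Printing Implicit Defensive.
Import Order.Theory.
Local Open Scope order_scope.

Definition card_le (S K : Type) : Prop := exists f : S -> K, injective f.
Definition card_lt (S K : Type) : Prop := card_le S K /\ ~ card_le K S.
Definition regular_cardinal (K : Type) : Prop :=
  card_le nat K /\
  forall (I : Type) (F : I -> Type),
    card_lt I K -> (forall i, card_lt (F i) K) -> card_lt {i : I & F i} K.

Section DLat.
Variables (d : Order.disp_t) (A : tbDistrLatticeType d).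

Definition pset := A -> Prop.

Definition pset_eq (P Q : pset) : Prop := forall x, P x <-> Q x.

Definition down (a : A) : pset := fun x => x <= a.

Definition downset (I : pset) : Prop := forall x y, x <= y -> I y -> I x.

Definition is_join (S : pset) (s : A) : Prop :=
  (forall x, S x -> x <= s) /\ (forall u, (forall x, S x -> x <= u) -> s <= u).

Definition dist_join (S : pset) (s : A) : Prop :=
  is_join S s /\
  forall a : A, is_join (fun y => exists2 x, S x & y = a `&` x) (a `&` s).

(* D-ideals: the elements of the Bruns-Lakser completion BL A *)
Definition D_ideal (I : pset) : Prop :=
  downset I /\
  forall (S : pset) (s : A), (forall x, S x -> I x) -> dist_join S s -> I s.

(* Dedekind-MacNeille completion: normal ideals N = N^{ul} *)
Definition upper (N : pset) : pset := fun u => forall x, N x -> x <= u.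
Definition lower (U : pset) : pset := fun x => forall u, U u -> x <= u.
Definition DM (N : pset) : Prop := pset_eq (lower (upper N)) N.

Definition BLmeet (P Q : pset) : pset := fun x => P x /\ Q x.
Definition Dgen (U : pset) : pset :=
  fun x => forall I, D_ideal I -> (forall y, U y -> I y) -> I x.
Definition BLjoin (J : Type) (F : J -> pset) : pset :=
  Dgen (fun y => exists j, F j y).
Definition BLtop : pset := fun _ => True.
Definition BLbot : pset := Dgen (fun _ => False).

Definition ext_closed (C : pset -> Prop) : Prop :=
  forall P Q, pset_eq P Q -> C P -> C Q.

Definition kframe_closed (K : Type) (C : pset -> Prop) : Prop :=
  ext_closed C /\
  (forall a, C (down a)) /\
  (forall P Q, C P -> C Q -> C (BLmeet P Q)) /\
  (forall (J : Type) (F : J -> pset),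
      card_lt J K -> (forall j, C (F j)) -> C (BLjoin F)).

(* BL_kappa A : the sub-kappa-frame of BL A generated by A (kappa = |K|) *)
Definition BLk (K : Type) (P : pset) : Prop :=
  forall C, kframe_closed K C -> C P.

Definition rel_ann (a b : A) : pset := fun x => a `&` x <= b.

Definition RA (P : pset) : Prop := exists a b, pset_eq P (rel_ann a b).

Definition pH_closed (C : pset -> Prop) : Prop :=
  ext_closed C /\
  (forall P, RA P -> C P) /\
  C BLtop /\ C BLbot /\
  (forall P Q, C P -> C Q -> C (BLmeet P Q)) /\
  (forall P Q, C P -> C Q -> C (BLjoin (fun b : bool => if b then P else Q))).

Definition pH (P : pset) : Prop := forall C, pH_closed C -> C P.

Definition in_kH (K : Type) : Prop := forall P, RA P -> BLk K P.
Definition in_prokH (K : Type) : Prop := forall P, RA P -> BLk K P /\ DM P.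

End DLat.

From mathcomp Require Import all_boot all_order.
Set Implicit Arguments.
Unset Strict Implicit.
Unset Printing Implicit Defensive.
Import Order.Theory.
Local Open Scope order_scope.

(* Since pH A is the bounded sublattice of BL A generated by R A, (1) amounts
   to BL_kappa A being closed under the bounded lattice operations of BL A;
   finite joins are kappa-joins because kappa is infinite.  For (2) it remains
   to see that every element of BL A is normal once every relative annihilator
   is.  If x lies in the normal closure of a D-ideal I, then x is the
   distributive join of {x /\ i : i in I}: whenever c /\ x /\ i <= u for all
   i in I, the normal ideal <c /\ x, u> contains I, hence x, so c /\ x <= u. *)

Lemma card_lt_finType (T : finType) (K : Type) : card_le nat K -> card_lt T K.
Proof.
case=> f f_inj; split.
  by exists (fun t => f (val (enum_rank t))) => s t /f_inj /val_inj /enum_rank_inj.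
case=> g g_inj.
have gf_inj : injective (fun i : 'I_#|T|.+1 => g (f (val i))).
  by move=> i j /g_inj /f_inj /val_inj.
by have := leq_card _ gf_inj; rewrite card_ord ltnn.
Qed.

Section BrunsLakser.
Variables (d : Order.disp_t) (A : tbDistrLatticeType d).
Implicit Types (a b c u x : A) (P Q I N U : pset A).

Lemma pH_RA P : RA P -> pH P.
Proof. by move=> RA_P C [_ [C_RA _]]; apply: C_RA. Qed.

Section KappaFrame.
Variable K : Type.
Hypothesis K_infinite : card_le nat K.

Lemma BLk_ext P Q : pset_eq P Q -> BLk K P -> BLk K Q.
Proof. by move=> PQ BP C C_closed; apply: C_closed.1 PQ (BP C C_closed). Qed.

Lemma BLk_down a : BLk K (down a).
Proof. by move=> C C_closed; apply: C_closed.2.1. Qed.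

Lemma BLk_meet P Q : BLk K P -> BLk K Q -> BLk K (BLmeet P Q).
Proof. by move=> BP BQ C C_closed; apply: C_closed.2.2.1; [apply: BP | apply: BQ]. Qed.

Lemma BLk_join (J : Type) (F : J -> pset A) :
  card_lt J K -> (forall j, BLk K (F j)) -> BLk K (BLjoin F).
Proof. by move=> JK BF C C_closed; apply: C_closed.2.2.2 => // j; apply: BF. Qed.

Lemma BLk_top : BLk K (@BLtop d A).
Proof.
apply: (@BLk_ext (down \top)); last exact: BLk_down.
by move=> x; split => // _; apply: lex1.
Qed.

Lemma BLk_bot : BLk K (@BLbot d A).
Proof.
apply: (@BLk_ext (BLjoin (fun j : void => match j with end))).
  by move=> x; split=> Hx I D_I sub; apply: Hx => // y; case=> [[]].
by apply: BLk_join; [apply: card_lt_finType | case].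
Qed.

Lemma BLk_join2 P Q :
  BLk K P -> BLk K Q -> BLk K (BLjoin (fun b : bool => if b then P else Q)).
Proof. by move=> BP BQ; apply: BLk_join; [apply: card_lt_finType | case]. Qed.

Lemma pH_closed_BLk : (forall P, RA P -> BLk K P) -> pH_closed (@BLk d A K).
Proof.
move=> RA_BLk; do !split => //.
- exact: BLk_ext.
- exact: BLk_top.
- exact: BLk_bot.
- exact: BLk_meet.
- exact: BLk_join2.
Qed.

End KappaFrame.

Lemma D_ideal_ext : ext_closed (@D_ideal d A).
Proof.
move=> P Q PQ [P_down P_join]; split.
  by move=> x y xy /PQ Py; apply/PQ; apply: P_down xy Py.
by move=> S s SQ Ss; apply/PQ; apply: P_join Ss => x /SQ /PQ.
Qed.

Lemma D_ideal_rel_ann a b : D_ideal (rel_ann a b).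
Proof.
split.
  by move=> x y xy; apply: le_trans; apply: leI2.
by move=> S s S_ann [_ /(_ a) [_ least]]; apply: least => _ [x Sx ->]; apply: S_ann.
Qed.

Lemma D_ideal_top : D_ideal (@BLtop d A).
Proof. by []. Qed.

Lemma D_ideal_Dgen U : D_ideal (Dgen U).
Proof.
split.
  by move=> x y xy Uy I D_I UI; apply: D_I.1 xy (Uy I D_I UI).
by move=> S s SU Ss I D_I UI; apply: D_I.2 Ss => x /SU; apply.
Qed.

Lemma D_ideal_meet P Q : D_ideal P -> D_ideal Q -> D_ideal (BLmeet P Q).
Proof.
move=> [P_down P_join] [Q_down Q_join]; split.
  by move=> x y xy [Py Qy]; split; [apply: P_down xy Py | apply: Q_down xy Qy].
by move=> S s SPQ Ss; split; [apply: P_join Ss => x /SPQ [] | apply: Q_join Ss => x /SPQ []].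
Qed.

Lemma pH_D_ideal P : pH P -> D_ideal P.
Proof.
apply; split; first exact: D_ideal_ext.
split.
  move=> Q [a [b ab]]; apply: D_ideal_ext (D_ideal_rel_ann a b).
  by move=> x; split=> /ab.
split; first exact: D_ideal_top.
split; first exact: D_ideal_Dgen.
by split; [exact: D_ideal_meet | move=> *; apply: D_ideal_Dgen].
Qed.

Lemma DM_lower_upper_sub N I x :
  DM N -> (forall i, I i -> N i) -> lower (upper I) x -> N x.
Proof. by move=> N_normal IN Ix; apply/N_normal => u Nu; apply: Ix => i /IN; apply: Nu. Qed.

Lemma dist_join_meet_le (S : pset A) s :
  (forall y, S y -> y <= s) ->
  (forall c u, (forall y, S y -> c `&` y <= u) -> c `&` s <= u) ->
  dist_join S s.
Proof.
move=> S_le least; split.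
  split=> // u Su; rewrite -[s]meet1x; apply: least => y Sy.
  by rewrite meet1x; apply: Su.
move=> a; split.
  by move=> _ [y Sy ->]; apply: leI2 => //; apply: S_le.
by move=> u Su; apply: least => y Sy; apply: Su; exists y.
Qed.

Lemma D_ideal_DM I :
  (forall a b, DM (rel_ann a b)) -> D_ideal I -> DM I.
Proof.
move=> ann_normal [I_down I_join] x; split; last by move=> Ix u; apply.
move=> x_closure; apply: (I_join (fun y => exists2 i, I i & y = x `&` i)).
  by move=> _ [i Ii ->]; apply: I_down (leIr _ _) Ii.
apply: dist_join_meet_le; first by move=> _ [i _ ->]; apply: leIl.
move=> c u below_u.
have : rel_ann (c `&` x) u x.
  apply: DM_lower_upper_sub x_closure => // i Ii.
  by rewrite /rel_ann -meetA; apply: below_u; exists i.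
by rewrite /rel_ann -meetA meetxx.
Qed.

End BrunsLakser.

Theorem theorem4p23 (d : Order.disp_t) (A : tbDistrLatticeType d) (K : Type)
  (hK : regular_cardinal K) :
  (in_kH A K <-> (forall P : pset A, pH P -> BLk K P)) /\
  (in_prokH A K <-> (forall P : pset A, pH P -> BLk K P /\ DM P)).
Proof.
have pH_BLk : in_kH A K -> forall P : pset A, pH P -> BLk K P.
  by move=> RA_BLk P; apply; apply: pH_closed_BLk hK.1 RA_BLk.
split; split.
- exact: pH_BLk.
- by move=> pH_sub P /pH_RA; apply: pH_sub.
- move=> RA_sub P pHP; split; first by apply: pH_BLk pHP => Q /RA_sub [].
  apply: D_ideal_DM (pH_D_ideal pHP) => a b.
  by apply: (RA_sub _ _).2; exists a, b.
- by move=> pH_sub P /pH_RA; apply: pH_sub.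
Qed.
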